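(* Let $G$ and $H$ be graphs with no isolated vertices. Then $$\gamma_{oir2}(G\times H)\leq \min\{\gamma_{oir2}(H)\,|V(G)|,\ \gamma_{oir2}(G)\,|V(H)|\}.$$
   Context: All graphs are finite and simple. For a graph $G$, a function $f:V(G)\to\mathcal{P}(\{1,2\})$ is an outer-independent 2-rainbow dominating function (OI2RD function) if every vertex $v$ with $f(v)=\emptyset$ satisfies $\bigcup_{u\in N(v)}f(u)=\{1,2\}$ and the set $\{v: f(v)=\emptyset\}$ is independent. The weight of $f$ is $\sum_{v}|f(v)|$ and $\gamma_{oir2}(G)$ is the minimum weight of an OI2RD function of $G$. The direct product $G\times H$ has vertex set $V(G)\times V(H)$, with $(x,y)(x',y')$ an edge iff $xx'\in E(G)$ and $yy'\in E(H)$. *)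

From mathcomp Require Import all_boot.
Set Implicit Arguments. Unset Strict Implicit. Unset Printing Implicit Defensive.

(* A finite simple graph: vertex set a finType V, adjacency a symmetric,
   irreflexive boolean relation e. Labels {1,2} are represented by 'I_2. *)
Definition simple_graph (V : finType) (e : rel V) : Prop :=
  symmetric e /\ irreflexive e.

Definition no_isolated (V : finType) (e : rel V) : Prop :=
  forall v : V, exists u : V, e v u.

Definition nbhd (V : finType) (e : rel V) (v : V) : {set V} := [set u | e v u].

Definition is_oi2rdf (V : finType) (e : rel V) (f : {ffun V -> {set 'I_2}}) : bool :=
  [forall v, (f v == set0) ==> (\bigcup_(u in nbhd e v) f u == [set: 'I_2])]
  && [forall v, forall w, ((f v == set0) && (f w == set0)) ==> ~~ e v w].

Definition weight (V : finType) (f : {ffun V -> {set 'I_2}}) : nat :=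
  \sum_(v : V) #|f v|.

(* minimum weight; the constant function {1,2} is always an OI2RD function of
   weight 2|V|, so the default value 2|V| does not affect the minimum. *)
Definition gamma_oir2 (V : finType) (e : rel V) : nat :=
  \big[minn/(2 * #|V|)]_(f : {ffun V -> {set 'I_2}} | is_oi2rdf e f) weight f.

Definition direct_prod (V W : finType) (e : rel V) (e' : rel W) : rel (V * W) :=
  fun x y => e x.1 y.1 && e' x.2 y.2.

From mathcomp Require Import all_boot all_order.
Set Implicit Arguments. Unset Strict Implicit. Unset Printing Implicit Defensive.
Import Order.TTheory.

(* Pull an optimal OI2RD function f of H back along the projection
   G x H -> H.  An unlabelled vertex (x, y) sees the labels of every
   neighbour u of y at a vertex (x', u), where x' is any neighbour of x (this
   is where G needs no isolated vertex); and adjacent vertices of G x H project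
   to adjacent vertices of H, so unlabelled vertices stay independent.  Every
   fibre of the projection has |V(G)| vertices, so the weight of the pullback
   is gamma(H) |V(G)|.  The other bound is symmetric. *)

Definition full_labelling (T : finType) : {ffun T -> {set 'I_2}} := [ffun=> setT].

Lemma full_labelling_oi2rdf (T : finType) (e : rel T) : is_oi2rdf e (full_labelling T).
Proof.
apply/andP; split; apply/forallP=> v.
  by rewrite ffunE -cards_eq0 cardsT card_ord.
by apply/forallP=> w; rewrite !ffunE -cards_eq0 cardsT card_ord.
Qed.

Lemma weight_full_labelling (T : finType) : weight (full_labelling T) = 2 * #|T|.
Proof.
rewrite /weight (eq_bigr (fun _ => 2)) => [|v _]; last by rewrite ffunE cardsT card_ord.
by rewrite sum_nat_const mulnC.
Qed.

Lemma gamma_oir2_le (T : finType) (e : rel T) f :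
  is_oi2rdf e f -> gamma_oir2 e <= weight f.
Proof.
move=> Hf; have := bigmin_le_cond (2 * #|T|) (@weight T) Hf.
by rewrite minEnat.
Qed.

Lemma gamma_oir2_attained (T : finType) (e : rel T) :
  exists2 f, is_oi2rdf e f & gamma_oir2 e = weight f.
Proof.
rewrite /gamma_oir2; elim/big_ind: _ => [|_ _ [f Hf ->] [g Hg ->]|f Hf].
- by exists (full_labelling T); rewrite ?full_labelling_oi2rdf ?weight_full_labelling.
- by case: leqP => _; [exists f | exists g].
- by exists f.
Qed.

Section Pullback.

Variables (A B : finType) (eA : rel A) (eB : rel B) (pi : A -> B).

Definition pullback (f : {ffun B -> {set 'I_2}}) : {ffun A -> {set 'I_2}} :=
  [ffun a => f (pi a)].

Hypothesis pi_homo : {homo pi : a a' / eA a a' >-> eB a a'}.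
Hypothesis pi_lift_edge : forall a b, eB (pi a) b -> exists2 a', eA a a' & pi a' = b.

Lemma pullback_oi2rdf f : is_oi2rdf eB f -> is_oi2rdf eA (pullback f).
Proof.
case/andP=> /forallP dom /forallP indep; apply/andP; split.
- apply/forallP=> a; rewrite ffunE; apply/implyP=> /(implyP (dom (pi a))).
  rewrite -!subTset => /subsetP sub_cup; apply/subsetP=> k /sub_cup.
  case/bigcupP=> b; rewrite inE => /pi_lift_edge [a' Ha' <-] Hk.
  by apply/bigcupP; exists a'; rewrite ?inE ?ffunE.
- apply/forallP=> a; apply/forallP=> a'; rewrite !ffunE; apply/implyP=> empty2.
  by apply: contra (implyP (forallP (indep (pi a)) (pi a')) empty2); apply: pi_homo.
Qed.

Variable n : nat.
Hypothesis pi_fibre_card : forall b, #|[set a | pi a == b]| = n.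

Lemma weight_pullback f : weight (pullback f) = weight f * n.
Proof.
rewrite /weight (partition_big pi xpredT) //= big_distrl /=.
apply: eq_bigr => b _; rewrite -(pi_fibre_card b) -sum1_card big_distrr /=.
rewrite big_mkcond [RHS]big_mkcond /=.
by apply: eq_bigr => a _; rewrite inE ffunE; case: eqP => [->|]; rewrite ?muln1.
Qed.

Lemma gamma_oir2_pullback_le : gamma_oir2 eA <= gamma_oir2 eB * n.
Proof.
have [f Hf ->] := gamma_oir2_attained eB.
by rewrite -weight_pullback; apply/gamma_oir2_le/pullback_oi2rdf.
Qed.

End Pullback.

Section DirectProduct.

Variables (V W : finType) (eG : rel V) (eH : rel W).

Lemma direct_prod_fst_homo : {homo fst : p q / direct_prod eG eH p q >-> eG p q}.
Proof. by move=> p q /andP []. Qed.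

Lemma direct_prod_snd_homo : {homo snd : p q / direct_prod eG eH p q >-> eH p q}.
Proof. by move=> p q /andP []. Qed.

Lemma direct_prod_lift_fst : no_isolated eH ->
  forall p x, eG p.1 x -> exists2 q, direct_prod eG eH p q & q.1 = x.
Proof. by move=> nH p x Hx; have [y Hy] := nH p.2; exists (x, y); rewrite //= /direct_prod Hx. Qed.

Lemma direct_prod_lift_snd : no_isolated eG ->
  forall p y, eH p.2 y -> exists2 q, direct_prod eG eH p q & q.2 = y.
Proof. by move=> nG p y Hy; have [x Hx] := nG p.1; exists (x, y); rewrite //= /direct_prod Hx. Qed.

Lemma card_fibre_fst x : #|[set p : V * W | p.1 == x]| = #|W|.
Proof.
have -> : [set p : V * W | p.1 == x] = setX [set x] setT.
  by apply/setP=> -[x' y]; rewrite !inE andbT.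
by rewrite cardsX cards1 cardsT mul1n.
Qed.

Lemma card_fibre_snd y : #|[set p : V * W | p.2 == y]| = #|V|.
Proof.
have -> : [set p : V * W | p.2 == y] = setX setT [set y].
  by apply/setP=> -[x y']; rewrite !inE.
by rewrite cardsX cards1 cardsT muln1.
Qed.

End DirectProduct.

Theorem theorem2 (V W : finType) (eG : rel V) (eH : rel W) :
  simple_graph eG -> simple_graph eH ->
  no_isolated eG -> no_isolated eH ->
  gamma_oir2 (direct_prod eG eH) <=
    minn (gamma_oir2 eH * #|V|) (gamma_oir2 eG * #|W|).
Proof.
move=> _ _ nG nH; rewrite leq_min; apply/andP; split.
- apply: (gamma_oir2_pullback_le (@direct_prod_snd_homo V W eG eH)).
    exact: direct_prod_lift_snd.
  exact: card_fibre_snd.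
- apply: (gamma_oir2_pullback_le (@direct_prod_fst_homo V W eG eH)).
    exact: direct_prod_lift_fst.
  exact: card_fibre_fst.
Qed.
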